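(* Let $N\in\mathbb N$, $\alpha,\beta>-1$, let $x_0<\dots<x_N$ be the Jacobi–Gauss–Lobatto (JGL) nodes and $h_0,\dots,h_N$ the associated Lagrange basis polynomials. For every $\mu>0$ and every $u\in\mathcal P_N$ one has $\hat I_-^\mu u\in\mathcal P_N$ and ${}^R\hat D_-^\mu u\in\mathcal P_N$ (after continuous extension to $x=-1$). Moreover $$ {}_0\mathcal P_N=\operatorname{span}\{\hat I_-^\mu h_j:\ 1\le j\le N\}. $$
   Context: For $\rho>0$ and $x\in(-1,1)$, $(I_-^\rho u)(x)=\frac{1}{\Gamma(\rho)}\int_{-1}^x (x-y)^{\rho-1}u(y)\,dy$, and $D^k=d^k/dx^k$. For $\mu\in(k-1,k)$, $k\in\mathbb N$, the Riemann–Liouville derivative is ${}^R D_-^\mu u=D^k(I_-^{k-\mu}u)$. The modified operators are $\hat I_-^\mu u=(1+x)^{-\mu}I_-^\mu u$ and ${}^R\hat D_-^\mu u=(1+x)^{\mu}\,{}^R D_-^\mu u$. $\mathcal P_N$ denotes polynomials of degree $\le N$ and ${}_0\mathcal P_N=\{\phi\in\mathcal P_N:\phi(-1)=0\}$. Jacobi polynomials $P_n^{(\alpha,\beta)}$ are in Szegő's normalization. The JGL nodes $x_0<x_1<\dots<x_N$ are the zeros of $(1-x^2)\frac{d}{dx}P_N^{(\alpha,\beta)}(x)$ (so $x_0=-1$, $x_N=1$), and $h_j\in\mathcal P_N$ is the Lagrange basis polynomial with $h_j(x_i)=\delta_{ij}$, $0\le i,j\le N$. *)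

From Stdlib Require Import Arith Reals ClassicalEpsilon.
Open Scope R_scope.

Definition poly_deg_le (N : nat) (f : R -> R) : Prop :=
  exists c : nat -> R, forall x, f x = sum_f_R0 (fun i => c i * x ^ i) N.

Fixpoint falling (z : R) (m : nat) : R :=
  match m with
  | O => 1
  | S m' => falling z m' * (z - INR m')
  end.
Definition gbinom (z : R) (m : nat) : R := falling z m / INR (fact m).

(* Jacobi polynomial in Szego's normalization (Szego (4.3.2)). *)
Definition jacobiP (n : nat) (a b : R) (x : R) : R :=
  sum_f_R0 (fun s => gbinom (INR n + a) (n - s) * gbinom (INR n + b) s
                     * ((x - 1) / 2) ^ s * ((x + 1) / 2) ^ (n - s)) n.

Definition improper_int_to (f : R -> R) (a b l : R) : Prop :=
  forall eps, 0 < eps -> exists delta, 0 < delta /\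
    forall t, a < t -> b - delta < t < b ->
      exists pr : Riemann_integrable f a t, Rabs (RiemannInt pr - l) < eps.

Definition improper_int (f : R -> R) (a b : R) : R :=
  epsilon (inhabits 0) (improper_int_to f a b).

Definition Gamma_is (r g : R) : Prop :=
  forall eps, 0 < eps -> exists delta, 0 < delta /\ exists M, forall a b,
    0 < a < delta -> M < b ->
    exists pr : Riemann_integrable (fun t => Rpower t (r - 1) * exp (- t)) a b,
      Rabs (RiemannInt pr - g) < eps.

Definition Gamma (r : R) : R := epsilon (inhabits 0) (Gamma_is r).

Definition I_minus (r : R) (u : R -> R) (x : R) : R :=
  / Gamma r * improper_int (fun y => Rpower (x - y) (r - 1) * u y) (-1) x.

Definition Ihat (mu : R) (u : R -> R) (x : R) : R :=
  Rpower (1 + x) (- mu) * I_minus mu u x.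

Fixpoint has_nth_deriv_on (k : nat) (f g : R -> R) : Prop :=
  match k with
  | O => forall x, -1 < x < 1 -> f x = g x
  | S k' => exists f' : R -> R,
      (forall x, -1 < x < 1 -> derivable_pt_lim f x (f' x)) /\
      has_nth_deriv_on k' f' g
  end.

(* Expanding u in powers of (1 + y), the Riemann-Liouville integral acts diagonally:
   I_-^r (1+y)^m = B(r, m+1) / Gamma(r) * (1+y)^(r+m).  Hence hat I_-^mu maps each
   (1+y)^m to a positive multiple of itself, so it is a bijection of P_N, and
   D^k I_-^(k-mu) sends (1+y)^m to (1+y)^(m-mu) times a constant.  The value of
   hat I_-^mu u at -1 is u(-1) / (mu Gamma(mu)); since the first JGL node is -1, the
   span of h_1, ..., h_N is exactly {u in P_N : u(-1) = 0}, and its image under this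
   bijection is therefore {p in P_N : p(-1) = 0}. *)

From Stdlib Require Import Reals ClassicalEpsilon Classical.
From Stdlib Require Import Lia Lra FunctionalExtensionality.
From Coquelicot Require Import Coquelicot.
Open Scope R_scope.

(** * Polynomials of bounded degree *)

Lemma poly_deg_le_ext n f g : (forall y, f y = g y) -> poly_deg_le n f -> poly_deg_le n g.
Proof. intros Hfg [c Hc]; exists c; intro y; rewrite <- Hfg; auto. Qed.

Lemma poly_deg_le_S n f : poly_deg_le n f -> poly_deg_le (S n) f.
Proof.
  intros [c Hc]. exists (fun i => if Nat.eqb i (S n) then 0 else c i).
  intro y. simpl. rewrite Nat.eqb_refl, Hc, Rmult_0_l, Rplus_0_r.
  apply sum_eq. intros i Hi. destruct (Nat.eqb_spec i (S n)); [lia|reflexivity].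
Qed.

Lemma poly_deg_le_mono n m f : (n <= m)%nat -> poly_deg_le n f -> poly_deg_le m f.
Proof. induction 1; auto using poly_deg_le_S. Qed.

Lemma poly_deg_le_const n a : poly_deg_le n (fun _ => a).
Proof.
  apply (poly_deg_le_mono 0); [lia|]. exists (fun _ => a). intro; simpl; ring.
Qed.

Lemma poly_deg_le_add n f g : poly_deg_le n f -> poly_deg_le n g ->
  poly_deg_le n (fun y => f y + g y).
Proof.
  intros [c Hc] [d Hd]. exists (fun i => c i + d i). intro y.
  rewrite Hc, Hd, <- plus_sum. apply sum_eq. intros; ring.
Qed.

Lemma poly_deg_le_scal n a f : poly_deg_le n f -> poly_deg_le n (fun y => a * f y).
Proof.
  intros [c Hc]. exists (fun i => a * c i). intro y.
  rewrite Hc, scal_sum. apply sum_eq. intros; ring.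
Qed.

Lemma poly_deg_le_sub n f g : poly_deg_le n f -> poly_deg_le n g ->
  poly_deg_le n (fun y => f y - g y).
Proof.
  intros Hf Hg. apply (poly_deg_le_ext _ (fun y => f y + -1 * g y)); [intros; ring|].
  apply poly_deg_le_add; [|apply poly_deg_le_scal]; auto.
Qed.

Lemma poly_deg_le_sum n k (F : nat -> R -> R) :
  (forall i, (i <= k)%nat -> poly_deg_le n (F i)) ->
  poly_deg_le n (fun y => sum_f_R0 (fun i => F i y) k).
Proof.
  induction k; intros HF; simpl; [apply HF; lia|].
  apply poly_deg_le_add; [apply IHk; intros|]; apply HF; lia.
Qed.

Lemma poly_deg_le_mulX n f : poly_deg_le n f -> poly_deg_le (S n) (fun y => y * f y).
Proof.
  intros [c Hc]. exists (fun i => match i with O => 0 | S k => c k end).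
  intro y. rewrite (decomp_sum _ (S n)) by lia. simpl pred.
  rewrite Hc, scal_sum. simpl. rewrite Rmult_0_l, Rplus_0_l.
  apply sum_eq. intros; ring.
Qed.

Lemma poly_deg_le_pow_shift a i : poly_deg_le i (fun y => (a + y) ^ i).
Proof.
  induction i; simpl.
  - apply poly_deg_le_const.
  - apply (poly_deg_le_ext _ (fun y => y * (a + y) ^ i + a * (a + y) ^ i)); [intros; ring|].
    apply poly_deg_le_add; [apply poly_deg_le_mulX | apply poly_deg_le_S, poly_deg_le_scal]; auto.
Qed.

Lemma poly_deg_le_shift n a f : poly_deg_le n f -> poly_deg_le n (fun y => f (a + y)).
Proof.
  intros [c Hc].
  apply (poly_deg_le_ext _ (fun y => sum_f_R0 (fun i => c i * (a + y) ^ i) n)); [intros; auto|].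
  apply poly_deg_le_sum. intros i Hi. apply poly_deg_le_scal.
  apply (poly_deg_le_mono i); auto using poly_deg_le_pow_shift.
Qed.

Lemma poly_deg_le_taylor n a f : poly_deg_le n f <->
  exists d : nat -> R, forall y, f y = sum_f_R0 (fun m => d m * (a + y) ^ m) n.
Proof.
  split.
  - intros Hf. destruct (poly_deg_le_shift n (- a) f Hf) as [d Hd]. exists d. intro y.
    rewrite <- Hd. f_equal. ring.
  - intros [d Hd]. apply (poly_deg_le_ext _ (fun y => sum_f_R0 (fun m => d m * (a + y) ^ m) n)).
    + intros; auto.
    + apply (poly_deg_le_shift n a (fun z => sum_f_R0 (fun m => d m * z ^ m) n)). exists d; auto.
Qed.

Lemma sum_pow0 (d : nat -> R) n : sum_f_R0 (fun m => d m * 0 ^ m) n = d 0%nat.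
Proof. induction n; simpl; [|rewrite IHn]; ring. Qed.

Lemma poly_factor_root n p z : poly_deg_le (S n) p -> p z = 0 ->
  exists q, poly_deg_le n q /\ forall y, p y = (y - z) * q y.
Proof.
  intros Hp Hz. destruct (proj1 (poly_deg_le_taylor _ (- z) p) Hp) as [d Hd].
  assert (Hd0 : d 0%nat = 0).
  { rewrite <- Hz, Hd, <- (sum_pow0 d (S n)). f_equal; apply functional_extensionality.
    intro m; f_equal; f_equal; ring. }
  exists (fun y => sum_f_R0 (fun m => d (S m) * (- z + y) ^ m) n). split.
  - apply (proj2 (poly_deg_le_taylor n (- z) _)). exists (fun m => d (S m)); auto.
  - intro y. rewrite Hd, (decomp_sum _ (S n)) by lia. simpl pred.
    rewrite Hd0, scal_sum. simpl. rewrite Rmult_0_l, Rplus_0_l.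
    apply sum_eq. intros; ring.
Qed.

Lemma poly_deg_le_roots_eq0 n : forall p (z : nat -> R), poly_deg_le n p ->
  (forall i j, (i <= n)%nat -> (j <= n)%nat -> i <> j -> z i <> z j) ->
  (forall i, (i <= n)%nat -> p (z i) = 0) -> forall y, p y = 0.
Proof.
  induction n; intros p z Hp Hinj Hroot y.
  - destruct Hp as [c Hc]. rewrite Hc, <- (Hroot 0%nat), Hc by lia. reflexivity.
  - destruct (poly_factor_root n p (z (S n)) Hp (Hroot _ (le_n _))) as [q [Hq Hpq]].
    assert (Hq0 : forall y, q y = 0).
    { apply (IHn q z Hq); [intros; apply Hinj; lia|].
      intros i Hi. specialize (Hroot i ltac:(lia)). rewrite Hpq in Hroot.
      destruct (Rmult_integral _ _ Hroot) as [Hzi|]; auto.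
      destruct (Hinj i (S n)); lia || lra. }
    rewrite Hpq, Hq0. ring.
Qed.

Lemma poly_eq_of_eq_on_interval n p q a b : a < b ->
  poly_deg_le n p -> poly_deg_le n q ->
  (forall y, a < y < b -> p y = q y) -> forall y, p y = q y.
Proof.
  intros Hab Hp Hq Hpq y. apply Rminus_diag_uniq. revert y.
  apply (poly_deg_le_roots_eq0 n _ (fun i => a + (b - a) / (INR i + 2))).
  - apply poly_deg_le_sub; auto.
  - intros i j _ _ Hij E. apply Hij, INR_eq. pose proof (pos_INR i). pose proof (pos_INR j).
    assert (E' : / (INR i + 2) = / (INR j + 2)).
    { apply (Rmult_eq_reg_l (b - a)); [|lra]. unfold Rdiv in E. lra. }
    apply (f_equal Rinv) in E'. rewrite !Rinv_inv in E'. lra.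
  - intros i _. pose proof (pos_INR i).
    assert (0 < / (INR i + 2) < 1).
    { split; [apply Rinv_0_lt_compat; lra|].
      rewrite <- Rinv_1. apply Rinv_lt_contravar; lra. }
    rewrite Hpq; [ring|]. unfold Rdiv. split; nra.
Qed.

(** * Fractional integrals of shifted monomials *)

Lemma Rpower_pos a b : 0 < Rpower a b.
Proof. apply exp_pos. Qed.

Lemma Rpower_succ a b : 0 < a -> Rpower a (b + 1) = Rpower a b * a.
Proof. intros; rewrite Rpower_plus, Rpower_1; auto. Qed.

Lemma derivable_pt_lim_Rpower_sub x y s : y < x ->
  derivable_pt_lim (fun y => Rpower (x - y) s) y (- s * Rpower (x - y) (s - 1)).
Proof.
  intros Hy.
  assert (Hlin : derivable_pt_lim (fun y => x - y) y (-1)).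
  { replace (-1) with (0 - 1) by ring.
    apply derivable_pt_lim_minus; [apply derivable_pt_lim_const | apply derivable_pt_lim_id]. }
  replace (- s * Rpower (x - y) (s - 1)) with (s * Rpower (x - y) (s - 1) * -1) by ring.
  exact (derivable_pt_lim_comp (fun y => x - y) (fun z => Rpower z s) y _ _ Hlin
           (derivable_pt_lim_power (x - y) s ltac:(lra))).
Qed.

Lemma is_RInt_Rpower_sub x a t s : a < t < x -> 0 < s ->
  is_RInt (fun y => Rpower (x - y) (s - 1)) a t ((Rpower (x - a) s - Rpower (x - t) s) / s).
Proof.
  intros Ht Hs.
  replace ((Rpower (x - a) s - Rpower (x - t) s) / s)
    with ((fun y => - Rpower (x - y) s / s) t - (fun y => - Rpower (x - y) s / s) a)
    by (simpl; field; lra).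
  apply (is_RInt_derive (fun y => - Rpower (x - y) s / s)).
  - intros y Hy. rewrite Rmin_left, Rmax_right in Hy by lra. apply is_derive_Reals.
    replace (Rpower (x - y) (s - 1)) with (-1 / s * (- s * Rpower (x - y) (s - 1)))
      by (field; lra).
    apply (derivable_pt_lim_ext (fun y => -1 / s * Rpower (x - y) s)); [intros; field; lra|].
    apply derivable_pt_lim_scal, derivable_pt_lim_Rpower_sub. lra.
  - intros y Hy. rewrite Rmin_left, Rmax_right in Hy by lra.
    apply (@ex_derive_continuous R_AbsRing R_NormedModule).
    exists (- (s - 1) * Rpower (x - y) (s - 1 - 1)).
    apply is_derive_Reals, derivable_pt_lim_Rpower_sub. lra.
Qed.

(* [rl_coef m r] is the Beta value B(r, m+1) = m! / (r (r+1) ... (r+m)); the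
   recursion comes from splitting (1+y) = (1+x) - (x-y) in the kernel below. *)
Fixpoint rl_coef (m : nat) (r : R) : R :=
  match m with O => / r | S m' => rl_coef m' r - rl_coef m' (r + 1) end.

Fixpoint rising (m : nat) (r : R) : R :=
  match m with O => r | S m' => r * rising m' (r + 1) end.

Lemma rising_pos m : forall r, 0 < r -> 0 < rising m r.
Proof. induction m; intros r Hr; simpl; auto. apply Rmult_lt_0_compat; auto; apply IHm; lra. Qed.

Lemma rising_S m : forall r, rising (S m) r = rising m r * (r + INR m + 1).
Proof.
  induction m; intros r; [simpl; ring|].
  change (rising (S (S m)) r) with (r * rising (S m) (r + 1)).
  rewrite IHm. simpl rising at 2. rewrite S_INR. ring.
Qed.

Lemma rl_coef_rising m : forall r, 0 < r -> rl_coef m r = INR (Factorial.fact m) / rising m r.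
Proof.
  induction m; intros r Hr; [simpl; field; lra|].
  simpl rl_coef. rewrite !IHm by lra.
  pose proof (rising_pos m (r + 1) ltac:(lra)). pose proof (rising_pos (S m) r Hr).
  change (Factorial.fact (S m)) with (S m * Factorial.fact m)%nat.
  rewrite mult_INR, S_INR.
  apply (Rmult_eq_reg_r (rising (S m) r)); [|lra].
  unfold Rdiv. rewrite Rmult_assoc, Rinv_l, Rmult_minus_distr_r by lra.
  change (rising (S m) r) with (r * rising m (r + 1)) at 2.
  rewrite (rising_S m r) at 1. pose proof (rising_pos m r Hr). field. split; lra.
Qed.

Lemma rl_coef_pos m r : 0 < r -> 0 < rl_coef m r.
Proof.
  intros Hr. rewrite rl_coef_rising by auto.
  apply Rdiv_lt_0_compat; [apply lt_0_INR, Factorial.lt_O_fact | apply rising_pos; auto].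
Qed.

(* [E] is the missing tail over [t, x], which is O((x - t)^r). *)
Lemma is_RInt_rl_kernel_partial x m : -1 < x -> forall r, 0 < r ->
  exists K, forall t, -1 < t < x -> exists E,
    is_RInt (fun y => Rpower (x - y) (r - 1) * (1 + y) ^ m) (-1) t
      (rl_coef m r * Rpower (1 + x) (r + INR m) - E) /\ Rabs E <= K * Rpower (x - t) r.
Proof.
  intros Hx. induction m; intros r Hr.
  - exists (/ r). intros t Ht. exists (Rpower (x - t) r / r). split.
    + apply (is_RInt_ext (fun y => Rpower (x - y) (r - 1))); [intros; simpl; ring|].
      replace (rl_coef 0 r * Rpower (1 + x) (r + INR 0) - Rpower (x - t) r / r)
        with ((Rpower (x - -1) r - Rpower (x - t) r) / r).
      * apply is_RInt_Rpower_sub; lra.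
      * simpl. replace (x - -1) with (1 + x) by ring. rewrite Rplus_0_r. field; lra.
    + pose proof (Rpower_pos (x - t) r). pose proof (Rinv_0_lt_compat r Hr).
      rewrite Rabs_right; unfold Rdiv; [rewrite Rmult_comm; lra | nra].
  - destruct (IHm r Hr) as [K1 H1]. destruct (IHm (r + 1) ltac:(lra)) as [K2 H2].
    exists ((1 + x) * (K1 + K2)). intros t Ht.
    destruct (H1 t Ht) as [E1 [I1 B1]]. destruct (H2 t Ht) as [E2 [I2 B2]].
    exists ((1 + x) * E1 - E2). split.
    + apply (is_RInt_ext (fun y => (1 + x) * (Rpower (x - y) (r - 1) * (1 + y) ^ m)
                                  - Rpower (x - y) (r + 1 - 1) * (1 + y) ^ m)).
      { intros y Hy. rewrite Rmin_left, Rmax_right in Hy by lra.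
        replace (r + 1 - 1) with (r - 1 + 1) by ring. rewrite Rpower_succ by lra.
        simpl. ring. }
      replace (rl_coef (S m) r * Rpower (1 + x) (r + INR (S m)) - ((1 + x) * E1 - E2))
        with ((1 + x) * (rl_coef m r * Rpower (1 + x) (r + INR m) - E1)
              - (rl_coef m (r + 1) * Rpower (1 + x) (r + 1 + INR m) - E2)).
      * apply (is_RInt_minus (V := R_CompleteNormedModule)); auto.
        apply (is_RInt_scal (V := R_CompleteNormedModule)); auto.
      * rewrite S_INR. replace (r + (INR m + 1)) with (r + INR m + 1) by ring.
        replace (r + 1 + INR m) with (r + INR m + 1) by ring.
        rewrite Rpower_succ by lra. simpl. ring.
    + pose proof (Rpower_pos (x - t) r).
      assert (Hstep : Rpower (x - t) (r + 1) <= Rpower (x - t) r * (1 + x)).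
      { rewrite Rpower_succ by lra. apply Rmult_le_compat_l; lra. }
      assert (HK2 : 0 <= K2).
      { apply (Rmult_le_reg_r (Rpower (x - t) (r + 1))); [apply Rpower_pos|].
        rewrite Rmult_0_l. eapply Rle_trans; [apply Rabs_pos | eauto]. }
      unfold Rminus. eapply Rle_trans; [apply Rabs_triang|].
      rewrite Rabs_Ropp, Rabs_mult, (Rabs_right (1 + x)) by lra.
      change (x + - t) with (x - t). nra.
Qed.

Definition improper_RInt (f : R -> R) (a b l : R) : Prop :=
  forall eps, 0 < eps -> exists delta, 0 < delta /\
    forall t, a < t -> b - delta < t < b -> exists v, is_RInt f a t v /\ Rabs (v - l) < eps.

Lemma improper_RInt_rl_kernel x m r : -1 < x -> 0 < r ->
  improper_RInt (fun y => Rpower (x - y) (r - 1) * (1 + y) ^ m) (-1) x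
    (rl_coef m r * Rpower (1 + x) (r + INR m)).
Proof.
  intros Hx Hr. destruct (is_RInt_rl_kernel_partial x m Hx r Hr) as [K HK].
  intros eps He. set (e := eps / (Rabs K + 1)).
  pose proof (Rabs_pos K).
  assert (He' : 0 < e) by (apply Rdiv_lt_0_compat; lra).
  exists (Rpower e (/ r)). split; [apply Rpower_pos|].
  intros t Ht1 Ht2. destruct (HK t ltac:(lra)) as [E [I B]].
  eexists; split; [exact I|].
  replace (rl_coef m r * Rpower (1 + x) (r + INR m) - E - rl_coef m r * Rpower (1 + x) (r + INR m))
    with (- E) by ring. rewrite Rabs_Ropp.
  assert (Hxt : Rpower (x - t) r < e).
  { replace e with (Rpower (Rpower e (/ r)) r).
    - apply Rlt_Rpower_l; lra.
    - rewrite Rpower_mult, Rinv_l, Rpower_1; lra. }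
  assert (HKe : Rabs K * e < eps).
  { unfold e. apply (Rmult_lt_reg_r (Rabs K + 1)); [lra|].
    unfold Rdiv. rewrite Rmult_assoc, Rmult_assoc, Rinv_l by lra. nra. }
  pose proof (Rpower_pos (x - t) r). pose proof (Rle_abs K). nra.
Qed.

Lemma improper_RInt_plus f g a b l1 l2 : improper_RInt f a b l1 -> improper_RInt g a b l2 ->
  improper_RInt (fun y => f y + g y) a b (l1 + l2).
Proof.
  intros H1 H2 eps He. destruct (H1 (eps / 2) ltac:(lra)) as [d1 [Hd1 K1]].
  destruct (H2 (eps / 2) ltac:(lra)) as [d2 [Hd2 K2]].
  exists (Rmin d1 d2). split; [apply Rmin_pos; auto|].
  intros t Ht1 Ht2. pose proof (Rmin_l d1 d2). pose proof (Rmin_r d1 d2).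
  destruct (K1 t Ht1 ltac:(lra)) as [v1 [I1 B1]]. destruct (K2 t Ht1 ltac:(lra)) as [v2 [I2 B2]].
  exists (v1 + v2). split; [apply (is_RInt_plus (V := R_CompleteNormedModule)); auto|].
  replace (v1 + v2 - (l1 + l2)) with ((v1 - l1) + (v2 - l2)) by ring.
  eapply Rle_lt_trans; [apply Rabs_triang | lra].
Qed.

Lemma improper_RInt_scal f a b c l : improper_RInt f a b l ->
  improper_RInt (fun y => c * f y) a b (c * l).
Proof.
  intros H eps He. pose proof (Rabs_pos c).
  destruct (H (eps / (Rabs c + 1))) as [d [Hd K]]; [apply Rdiv_lt_0_compat; lra|].
  exists d; split; auto. intros t Ht1 Ht2. destruct (K t Ht1 Ht2) as [v [I B]].
  exists (c * v). split; [apply (is_RInt_scal (V := R_CompleteNormedModule)); auto|].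
  rewrite <- Rmult_minus_distr_l, Rabs_mult.
  apply (Rle_lt_trans _ (Rabs c * (eps / (Rabs c + 1)))); [apply Rmult_le_compat_l; lra|].
  apply (Rmult_lt_reg_r (Rabs c + 1)); [lra|].
  unfold Rdiv. rewrite Rmult_assoc, Rmult_assoc, Rinv_l by lra. nra.
Qed.

Lemma improper_RInt_sum (F : nat -> R -> R) (L : nat -> R) a b n :
  (forall i, (i <= n)%nat -> improper_RInt (F i) a b (L i)) ->
  improper_RInt (fun y => sum_f_R0 (fun i => F i y) n) a b (sum_f_R0 L n).
Proof.
  induction n; intros H; simpl; [apply H; lia|].
  apply improper_RInt_plus; [apply IHn; intros|]; apply H; lia.
Qed.

Lemma improper_int_to_of_RInt f a b l : improper_RInt f a b l -> improper_int_to f a b l.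
Proof.
  intros H eps He. destruct (H eps He) as [d [Hd K]]. exists d; split; auto.
  intros t Ht1 Ht2. destruct (K t Ht1 Ht2) as [v [I B]].
  exists (ex_RInt_Reals_0 _ _ _ (ex_intro _ v I)).
  rewrite <- RInt_Reals, (is_RInt_unique _ _ _ _ I). auto.
Qed.

Lemma improper_int_to_unique f a b l1 l2 : a < b ->
  improper_int_to f a b l1 -> improper_int_to f a b l2 -> l1 = l2.
Proof.
  intros Hab H1 H2. destruct (Req_dec l1 l2) as [|Hne]; auto. exfalso.
  set (e := Rabs (l1 - l2) / 2).
  assert (He : 0 < e) by (apply Rdiv_lt_0_compat; [apply Rabs_pos_lt|]; lra).
  destruct (H1 e He) as [d1 [Hd1 K1]]. destruct (H2 e He) as [d2 [Hd2 K2]].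
  set (d := Rmin (Rmin d1 d2) (b - a)).
  assert (0 < d) by (unfold d; repeat apply Rmin_pos; lra).
  assert (d <= d1 /\ d <= d2 /\ d <= b - a).
  { unfold d. pose proof (Rmin_l (Rmin d1 d2) (b - a)). pose proof (Rmin_r (Rmin d1 d2) (b - a)).
    pose proof (Rmin_l d1 d2). pose proof (Rmin_r d1 d2). lra. }
  destruct (K1 (b - d / 2) ltac:(lra) ltac:(lra)) as [p1 B1].
  destruct (K2 (b - d / 2) ltac:(lra) ltac:(lra)) as [p2 B2].
  rewrite (RiemannInt_P5 p2 p1) in B2.
  assert (Rabs (l1 - l2) <= Rabs (RiemannInt p1 - l1) + Rabs (RiemannInt p1 - l2)).
  { replace (l1 - l2) with (- (RiemannInt p1 - l1) + (RiemannInt p1 - l2)) by ring.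
    eapply Rle_trans; [apply Rabs_triang|]. rewrite Rabs_Ropp; lra. }
  unfold e in *. lra.
Qed.

Lemma improper_int_eq f a b l : a < b -> improper_RInt f a b l -> improper_int f a b = l.
Proof.
  intros Hab H. apply improper_int_to_of_RInt in H.
  unfold improper_int. apply (improper_int_to_unique f a b); auto.
  apply epsilon_spec. exists l; auto.
Qed.

Lemma I_minus_shifted_poly r u d n x : 0 < r -> -1 < x ->
  (forall y, u y = sum_f_R0 (fun m => d m * (1 + y) ^ m) n) ->
  I_minus r u x
  = / Gamma r * sum_f_R0 (fun m => d m * rl_coef m r * Rpower (1 + x) (r + INR m)) n.
Proof.
  intros Hr Hx Hu. unfold I_minus. f_equal. apply improper_int_eq; [lra|].
  replace (fun y => Rpower (x - y) (r - 1) * u y) with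
    (fun y => sum_f_R0 (fun m => d m * (Rpower (x - y) (r - 1) * (1 + y) ^ m)) n).
  - replace (sum_f_R0 (fun m => d m * rl_coef m r * Rpower (1 + x) (r + INR m)) n)
      with (sum_f_R0 (fun m => d m * (rl_coef m r * Rpower (1 + x) (r + INR m))) n)
      by (apply sum_eq; intros; ring).
    apply improper_RInt_sum. intros i Hi.
    apply improper_RInt_scal, improper_RInt_rl_kernel; auto.
  - apply functional_extensionality. intro y. rewrite Hu, scal_sum. apply sum_eq. intros; ring.
Qed.

Lemma Ihat_shifted_poly mu u d n x : 0 < mu -> -1 < x ->
  (forall y, u y = sum_f_R0 (fun m => d m * (1 + y) ^ m) n) ->
  Ihat mu u x = sum_f_R0 (fun m => d m * (rl_coef m mu / Gamma mu) * (1 + x) ^ m) n.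
Proof.
  intros Hmu Hx Hu. unfold Ihat. rewrite (I_minus_shifted_poly mu u d n x Hmu Hx Hu).
  rewrite <- Rmult_assoc, scal_sum. apply sum_eq. intros i Hi.
  rewrite Rpower_plus, Rpower_pow, Rpower_Ropp by lra.
  pose proof (Rpower_pos (1 + x) mu).
  transitivity ((Rpower (1 + x) mu * / Rpower (1 + x) mu)
                * (d i * (rl_coef i mu / Gamma mu) * (1 + x) ^ i)).
  - unfold Rdiv; ring.
  - rewrite Rinv_r by lra. ring.
Qed.

(** * Positivity of the Gamma function *)

Lemma continuous_of_derivable_pt_lim f t l : derivable_pt_lim f t l -> continuous f t.
Proof.
  intros H. apply continuity_pt_filterlim, derivable_continuous_pt. exists l; auto.
Qed.

Lemma Rpower_base_1 y : Rpower 1 y = 1.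
Proof. unfold Rpower; rewrite ln_1, Rmult_0_r, exp_0; auto. Qed.

Definition gamma_integrand (mu t : R) : R := Rpower t (mu - 1) * exp (- t).

Lemma gamma_integrand_pos mu t : 0 < gamma_integrand mu t.
Proof. apply Rmult_lt_0_compat; [apply Rpower_pos | apply exp_pos]. Qed.

Lemma gamma_integrand_continuous mu t : 0 < t -> continuous (gamma_integrand mu) t.
Proof.
  intros Ht. eapply continuous_of_derivable_pt_lim.
  apply (derivable_pt_lim_mult (fun t => Rpower t (mu - 1)) (fun t => exp (- t))).
  - apply derivable_pt_lim_power; auto.
  - apply (derivable_pt_lim_comp Ropp exp t (-1) (exp (- t))).
    + apply (derivable_pt_lim_opp id t 1), derivable_pt_lim_id.
    + apply derivable_pt_lim_exp.
Qed.

Lemma ex_RInt_gamma_integrand mu a b : 0 < a -> a <= b -> ex_RInt (gamma_integrand mu) a b.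
Proof.
  intros Ha Hab. apply (@ex_RInt_continuous R_CompleteNormedModule). intros z Hz.
  rewrite Rmin_left, Rmax_right in Hz by lra. apply gamma_integrand_continuous; lra.
Qed.

Lemma RInt_gamma_integrand_Chasles mu a b c : 0 < a -> a <= b -> b <= c ->
  RInt (gamma_integrand mu) a c = RInt (gamma_integrand mu) a b + RInt (gamma_integrand mu) b c.
Proof.
  intros. symmetry. apply (RInt_Chasles (V := R_CompleteNormedModule));
  apply ex_RInt_gamma_integrand; lra.
Qed.

Lemma RInt_gamma_integrand_ge0 mu a b : 0 < a -> a <= b -> 0 <= RInt (gamma_integrand mu) a b.
Proof.
  intros. apply RInt_ge_0; auto; [apply ex_RInt_gamma_integrand; auto|].
  intros; left; apply gamma_integrand_pos.
Qed.

(* Near 0 the integrand is at most t^(mu-1), with primitive t^mu / mu. *)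
Lemma RInt_gamma_integrand_head_le mu a : 0 < mu -> 0 < a <= 1 ->
  RInt (gamma_integrand mu) a 1 <= / mu.
Proof.
  intros Hmu Ha. set (F := fun t => Rpower t mu / mu).
  assert (I : is_RInt (fun t => Rpower t (mu - 1)) a 1 (F 1 - F a)).
  { apply (is_RInt_derive F).
    - intros z Hz. rewrite Rmin_left, Rmax_right in Hz by lra. apply is_derive_Reals.
      replace (Rpower z (mu - 1)) with (/ mu * (mu * Rpower z (mu - 1))) by (field; lra).
      apply (derivable_pt_lim_ext (fun t => / mu * Rpower t mu)); [intros; unfold F, Rdiv; ring|].
      apply derivable_pt_lim_scal, derivable_pt_lim_power. lra.
    - intros z Hz. rewrite Rmin_left, Rmax_right in Hz by lra.
      eapply continuous_of_derivable_pt_lim, derivable_pt_lim_power. lra. }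
  apply (Rle_trans _ (F 1 - F a)).
  - rewrite <- (is_RInt_unique _ _ _ _ I). apply RInt_le; try lra.
    + apply ex_RInt_gamma_integrand; lra.
    + eexists; eauto.
    + intros t Ht. unfold gamma_integrand. pose proof (Rpower_pos t (mu - 1)).
      assert (exp (- t) <= 1) by (rewrite <- exp_0; left; apply exp_increasing; lra). nra.
  - unfold F. rewrite Rpower_base_1. pose proof (Rpower_pos a mu).
    pose proof (Rinv_0_lt_compat mu Hmu). unfold Rdiv. nra.
Qed.

Lemma exp_ge_pow_div_fact t n : 0 <= t -> t ^ n / INR (Factorial.fact n) <= exp t.
Proof.
  intros Ht. destruct n as [|n]; [simpl; rewrite Rdiv_1_r; rewrite <- exp_0;
    destruct Ht as [Ht|<-]; [left; apply exp_increasing|]; lra|].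
  eapply Rle_trans; [|apply (exp_ge_taylor t (S n) Ht)].
  rewrite tech5. enough (0 <= sum_f_R0 (fun k => t ^ k / INR (Factorial.fact k)) n) by lra.
  apply cond_pos_sum. intros k. apply Rmult_le_pos; [apply pow_le; auto|].
  left; apply Rinv_0_lt_compat, lt_0_INR, Factorial.lt_O_fact.
Qed.

(* Near infinity, e^(-t) <= n!/t^n with n >= mu + 1 gives the integrable bound n! t^(-2). *)
Lemma gamma_integrand_tail_le mu n t : 1 <= t -> mu + 1 <= INR n ->
  gamma_integrand mu t <= INR (Factorial.fact n) * Rpower t (-1 - 1).
Proof.
  intros Ht Hn. set (F := INR (Factorial.fact n)).
  assert (HF : 0 < F) by apply lt_0_INR, Factorial.lt_O_fact.
  assert (Hp : 0 < t ^ n) by (apply pow_lt; lra).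
  assert (Hexp : exp (- t) <= F / t ^ n).
  { rewrite exp_Ropp. replace (F / t ^ n) with (/ (t ^ n / F)) by (field; lra).
    apply Rinv_le_contravar; [apply Rdiv_lt_0_compat; auto|].
    apply exp_ge_pow_div_fact; lra. }
  unfold gamma_integrand. pose proof (Rpower_pos t (mu - 1)).
  apply (Rle_trans _ (Rpower t (mu - 1) * (F / t ^ n))); [apply Rmult_le_compat_l; lra|].
  rewrite <- (Rpower_pow n t) by lra.
  replace (Rpower t (mu - 1) * (F / Rpower t (INR n))) with (F * Rpower t (mu - 1 + - INR n))
    by (rewrite Rpower_plus, Rpower_Ropp; unfold Rdiv; ring).
  apply Rmult_le_compat_l; [lra|]. apply Rle_Rpower; lra.
Qed.

Lemma RInt_gamma_integrand_tail_le mu n b : 1 <= b -> mu + 1 <= INR n ->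
  RInt (gamma_integrand mu) 1 b <= INR (Factorial.fact n).
Proof.
  intros Hb Hn. set (F := INR (Factorial.fact n)).
  assert (HF : 0 < F) by apply lt_0_INR, Factorial.lt_O_fact.
  set (G := fun t => - F * Rpower t (-1)).
  assert (I : is_RInt (fun t => F * Rpower t (-1 - 1)) 1 b (G b - G 1)).
  { apply (is_RInt_derive G).
    - intros z Hz. rewrite Rmin_left, Rmax_right in Hz by lra. apply is_derive_Reals.
      replace (F * Rpower z (-1 - 1)) with (- F * (-1 * Rpower z (-1 - 1))) by ring.
      apply derivable_pt_lim_scal, derivable_pt_lim_power. lra.
    - intros z Hz. rewrite Rmin_left, Rmax_right in Hz by lra.
      eapply continuous_of_derivable_pt_lim.
      apply (derivable_pt_lim_scal (fun t => Rpower t (-1 - 1))), derivable_pt_lim_power. lra. }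
  destruct (Rle_lt_or_eq_dec 1 b Hb) as [Hb'|<-].
  - apply (Rle_trans _ (G b - G 1)).
    + rewrite <- (is_RInt_unique _ _ _ _ I). apply RInt_le; try lra.
      * apply ex_RInt_gamma_integrand; lra.
      * eexists; eauto.
      * intros t Ht. apply gamma_integrand_tail_le; lra.
    + unfold G. rewrite Rpower_base_1. pose proof (Rpower_pos b (-1)). nra.
  - rewrite RInt_point. unfold zero; simpl. lra.
Qed.

Lemma Riemann_integrable_gamma_integrand mu a b : 0 < a -> a <= b ->
  exists pr : Riemann_integrable (fun t => Rpower t (mu - 1) * exp (- t)) a b,
    RiemannInt pr = RInt (gamma_integrand mu) a b.
Proof.
  intros Ha Hab. exists (ex_RInt_Reals_0 _ _ _ (ex_RInt_gamma_integrand mu a b Ha Hab)).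
  rewrite <- RInt_Reals. reflexivity.
Qed.

(* The two halves of the improper integral converge to the suprema of the
   (monotone, bounded) partial integrals on [a, 1] and [1, b]. *)
Lemma Gamma_is_exists mu : 0 < mu -> exists g, Gamma_is mu g.
Proof.
  intros Hmu. destruct (INR_unbounded (mu + 1)) as [n Hn].
  set (J := RInt (gamma_integrand mu)).
  set (EA := fun v => exists a, 0 < a <= 1 /\ v = J a 1).
  set (EB := fun v => exists b, 1 <= b /\ v = J 1 b).
  destruct (completeness EA) as [SA HA].
  { exists (/ mu). intros v [a [Ha ->]]. apply RInt_gamma_integrand_head_le; auto. }
  { exists (J 1 1), 1. split; auto; lra. }
  destruct (completeness EB) as [SB HB].
  { exists (INR (Factorial.fact n)). intros v [b [Hb ->]].
    apply (RInt_gamma_integrand_tail_le mu n); lra. }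
  { exists (J 1 1), 1. split; auto; lra. }
  exists (SA + SB). intros eps He.
  assert (XA : exists a0, 0 < a0 <= 1 /\ J a0 1 > SA - eps / 2).
  { apply NNPP. intro H. enough (SA <= SA - eps / 2) by lra.
    apply HA. intros v [a [Ha ->]]. apply Rnot_gt_le. intro Hc. apply H. exists a; auto. }
  assert (XB : exists b0, 1 <= b0 /\ J 1 b0 > SB - eps / 2).
  { apply NNPP. intro H. enough (SB <= SB - eps / 2) by lra.
    apply HB. intros v [b [Hb ->]]. apply Rnot_gt_le. intro Hc. apply H. exists b; auto. }
  destruct XA as [a0 [Ha0 Ka]]. destruct XB as [b0 [Hb0 Kb]].
  exists a0. split; [lra|]. exists b0. intros a b Ha Hb.
  destruct (Riemann_integrable_gamma_integrand mu a b) as [pr Hpr]; try lra.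
  exists pr. rewrite Hpr, (RInt_gamma_integrand_Chasles mu a 1 b) by lra. fold J.
  assert (J a 1 <= SA) by (apply HA; exists a; split; auto; lra).
  assert (J 1 b <= SB) by (apply HB; exists b; split; auto; lra).
  assert (J a0 1 <= J a 1).
  { unfold J. rewrite (RInt_gamma_integrand_Chasles mu a a0 1) by lra.
    pose proof (RInt_gamma_integrand_ge0 mu a a0). lra. }
  assert (J 1 b0 <= J 1 b).
  { unfold J. rewrite (RInt_gamma_integrand_Chasles mu 1 b0 b) by lra.
    pose proof (RInt_gamma_integrand_ge0 mu b0 b). lra. }
  apply Rabs_def1; lra.
Qed.

Lemma Gamma_is_pos mu g : Gamma_is mu g -> 0 < g.
Proof.
  intros H. set (J := RInt (gamma_integrand mu)).
  assert (HJ : 0 < J 1 2).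
  { apply RInt_gt_0; try lra; intros; [apply gamma_integrand_pos|].
    apply gamma_integrand_continuous; lra. }
  destruct (H (J 1 2 / 2) ltac:(lra)) as [d [Hd [M HM]]].
  set (a := Rmin d 1 / 2). set (b := Rmax M 2 + 1).
  assert (0 < a < d /\ a <= 1).
  { unfold a. pose proof (Rmin_l d 1). pose proof (Rmin_r d 1).
    assert (0 < Rmin d 1) by (apply Rmin_pos; lra). lra. }
  assert (M < b /\ 2 <= b) by (unfold b; pose proof (Rmax_l M 2); pose proof (Rmax_r M 2); lra).
  destruct (HM a b ltac:(lra) ltac:(lra)) as [pr Hpr].
  destruct (Riemann_integrable_gamma_integrand mu a b) as [pr' Hpr']; try lra.
  rewrite (RiemannInt_P5 pr pr'), Hpr', (RInt_gamma_integrand_Chasles mu a 1 b),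
    (RInt_gamma_integrand_Chasles mu 1 2 b) in Hpr by lra.
  pose proof (RInt_gamma_integrand_ge0 mu a 1). pose proof (RInt_gamma_integrand_ge0 mu 2 b).
  apply Rabs_def2 in Hpr. unfold J in *. lra.
Qed.

Lemma Gamma_pos mu : 0 < mu -> 0 < Gamma mu.
Proof.
  intros Hmu. apply (Gamma_is_pos mu). unfold Gamma. apply epsilon_spec.
  apply Gamma_is_exists; auto.
Qed.
(** * Derivatives of sums of shifted powers *)

Lemma derivable_pt_lim_on_interval f F y l : (forall z, -1 < z < 1 -> f z = F z) ->
  -1 < y < 1 -> derivable_pt_lim F y l -> derivable_pt_lim f y l.
Proof.
  intros Hf Hy H eps He. destruct (H eps He) as [d Hd].
  assert (Hp : 0 < Rmin d (Rmin (y + 1) (1 - y))).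
  { apply Rmin_pos; [apply cond_pos | apply Rmin_pos; lra]. }
  exists (mkposreal _ Hp). intros h Hh Hlt. simpl in Hlt.
  pose proof (Rmin_l d (Rmin (y + 1) (1 - y))). pose proof (Rmin_r d (Rmin (y + 1) (1 - y))).
  pose proof (Rmin_l (y + 1) (1 - y)). pose proof (Rmin_r (y + 1) (1 - y)).
  apply Rabs_def2 in Hlt as Hlt'.
  rewrite (Hf y Hy), (Hf (y + h)) by lra. apply Hd; auto; lra.
Qed.

Lemma derivable_pt_lim_sum (G G' : nat -> R -> R) y n :
  (forall m, (m <= n)%nat -> derivable_pt_lim (G m) y (G' m y)) ->
  derivable_pt_lim (fun z => sum_f_R0 (fun m => G m z) n) y (sum_f_R0 (fun m => G' m y) n).
Proof.
  induction n; intros H; simpl; [apply H; lia|].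
  apply (derivable_pt_lim_plus (fun z => sum_f_R0 (fun m => G m z) n) (G (S n)));
    [apply IHn; intros|]; apply H; lia.
Qed.

Lemma derivable_pt_lim_Rpower_shift e s y : -1 < y ->
  derivable_pt_lim (fun z => e * Rpower (1 + z) s) y (e * s * Rpower (1 + y) (s - 1)).
Proof.
  intros Hy.
  assert (Hlin : derivable_pt_lim (fun z => 1 + z) y 1).
  { apply is_derive_Reals. auto_derive; auto. }
  replace (e * s * Rpower (1 + y) (s - 1)) with (e * (s * Rpower (1 + y) (s - 1) * 1)) by ring.
  apply (derivable_pt_lim_scal (fun z => Rpower (1 + z) s)).
  exact (derivable_pt_lim_comp (fun z => 1 + z) (fun z => Rpower z s) y _ _ Hlin
           (derivable_pt_lim_power (1 + y) s ltac:(lra))).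
Qed.

Lemma falling_S s k : falling s (S k) = s * falling (s - 1) k.
Proof.
  induction k; [simpl; ring|].
  change (falling s (S (S k))) with (falling s (S k) * (s - INR (S k))).
  rewrite IHk. simpl falling. rewrite S_INR. ring.
Qed.

Lemma has_nth_deriv_on_Rpower_sum k : forall n (e s : nat -> R) f g,
  (forall y, -1 < y < 1 -> f y = sum_f_R0 (fun m => e m * Rpower (1 + y) (s m)) n) ->
  (forall y, -1 < y < 1 ->
     g y = sum_f_R0 (fun m => e m * falling (s m) k * Rpower (1 + y) (s m - INR k)) n) ->
  has_nth_deriv_on k f g.
Proof.
  induction k; intros n e s f g Hf Hg.
  - intros y Hy. rewrite Hf, Hg by auto. apply sum_eq. intros. simpl.
    rewrite Rminus_0_r. ring.
  - exists (fun y => sum_f_R0 (fun m => e m * s m * Rpower (1 + y) (s m - 1)) n). split.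
    + intros y Hy.
      apply (derivable_pt_lim_on_interval _
               (fun z => sum_f_R0 (fun m => e m * Rpower (1 + z) (s m)) n)); auto.
      apply (derivable_pt_lim_sum (fun m z => e m * Rpower (1 + z) (s m))
               (fun m z => e m * s m * Rpower (1 + z) (s m - 1))).
      intros; apply derivable_pt_lim_Rpower_shift; lra.
    + apply (IHk n (fun m => e m * s m) (fun m => s m - 1)); [reflexivity|].
      intros y Hy. rewrite Hg by auto. apply sum_eq. intros i Hi.
      rewrite falling_S, S_INR. replace (s i - (INR k + 1)) with (s i - 1 - INR k) by ring. ring.
Qed.

(** * The first Jacobi-Gauss-Lobatto node *)

Definition jacobi_coef N a b s := gbinom (INR N + a) (N - s) * gbinom (INR N + b) s.

Definition djacobiP N a b y := sum_f_R0 (fun s => jacobi_coef N a b s *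
   (INR s * ((y - 1) / 2) ^ pred s * / 2 * ((y + 1) / 2) ^ (N - s)
    + ((y - 1) / 2) ^ s * (INR (N - s) * ((y + 1) / 2) ^ pred (N - s) * / 2))) N.

Lemma derivable_pt_lim_jacobiP N a b y : derivable_pt_lim (jacobiP N a b) y (djacobiP N a b y).
Proof.
  unfold jacobiP, djacobiP.
  apply (derivable_pt_lim_sum (fun s y => jacobi_coef N a b s *
     ((y - 1) / 2) ^ s * ((y + 1) / 2) ^ (N - s)) (fun s y => jacobi_coef N a b s *
   (INR s * ((y - 1) / 2) ^ pred s * / 2 * ((y + 1) / 2) ^ (N - s)
    + ((y - 1) / 2) ^ s * (INR (N - s) * ((y + 1) / 2) ^ pred (N - s) * / 2)))).
  intros s Hs.
  apply (derivable_pt_lim_ext (fun y => jacobi_coef N a b s *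
     (((y - 1) / 2) ^ s * ((y + 1) / 2) ^ (N - s)))); [intros; ring|].
  apply derivable_pt_lim_scal, is_derive_Reals.
  auto_derive; auto. unfold Rminus, Rdiv. ring.
Qed.

Lemma falling_pos z m : (forall j, (j < m)%nat -> 0 < z - INR j) -> 0 < falling z m.
Proof.
  induction m; intros H; simpl; [lra|].
  apply Rmult_lt_0_compat; [apply IHm; intros|]; apply H; lia.
Qed.

Lemma gbinom_pos z m : (forall j, (j < m)%nat -> 0 < z - INR j) -> 0 < gbinom z m.
Proof.
  intros H. apply Rdiv_lt_0_compat; [apply falling_pos; auto|].
  apply lt_0_INR, Factorial.lt_O_fact.
Qed.

Lemma jacobi_coef_pos N a b s : -1 < a -> -1 < b -> (s <= N)%nat -> 0 < jacobi_coef N a b s.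
Proof.
  intros Ha Hb Hs. apply Rmult_lt_0_compat; apply gbinom_pos; intros j Hj.
  - assert (H : INR (j + s + 1) <= INR N) by (apply le_INR; lia).
    rewrite !plus_INR in H. simpl in H. pose proof (pos_INR s). lra.
  - assert (H : INR (j + 1) <= INR N) by (apply le_INR; lia).
    rewrite plus_INR in H. simpl in H. lra.
Qed.

Lemma sum_f_R0_ge0 (T : nat -> R) n : (forall s, (s <= n)%nat -> 0 <= T s) -> 0 <= sum_f_R0 T n.
Proof.
  induction n; intros H; simpl; [apply H; lia|].
  apply Rplus_le_le_0_compat; [apply IHn; intros|]; apply H; lia.
Qed.

(* Left of -1 both factors (y-1)/2 and (y+1)/2 are negative, so every term of
   [djacobiP] has the sign (-1)^(N-1), and the top term s = N is nonzero. *)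
Lemma djacobiP_neq0_left N a b y : (1 <= N)%nat -> -1 < a -> -1 < b -> y < -1 ->
  djacobiP N a b y <> 0.
Proof.
  intros HN Ha Hb Hy. set (A := (1 - y) / 2). set (B := - (y + 1) / 2).
  assert (HA : 0 < A) by (unfold A; lra). assert (HB : 0 < B) by (unfold B; lra).
  set (T := fun s => jacobi_coef N a b s * (INR s * A ^ pred s * / 2 * B ^ (N - s)
          + A ^ s * (INR (N - s) * B ^ pred (N - s) * / 2))).
  assert (E : djacobiP N a b y = (-1) ^ (N - 1) * sum_f_R0 T N).
  { unfold djacobiP. rewrite scal_sum. apply sum_eq. intros s Hs. unfold T.
    replace ((y - 1) / 2) with (-1 * A) by (unfold A; field).
    replace ((y + 1) / 2) with (-1 * B) by (unfold B; field).
    rewrite !Rpow_mult_distr.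
    destruct s as [|s'].
    - destruct N as [|N']; [lia|]. simpl pred. rewrite Nat.sub_0_r.
      replace (S N' - 1)%nat with N' by lia. simpl. ring.
    - simpl pred. destruct (N - S s')%nat as [|n] eqn:EN.
      + replace (N - 1)%nat with s' by lia. simpl. ring.
      + simpl pred. replace (N - 1)%nat with (s' + S n)%nat by lia.
        rewrite pow_add. replace (S s') with (s' + 1)%nat by lia.
        replace (S n) with (n + 1)%nat by lia. rewrite !pow_add. simpl. ring. }
  rewrite E. apply Rmult_integral_contrapositive. split; [apply pow_nonzero; lra|].
  assert (HT : forall s, (s <= N)%nat -> 0 <= T s).
  { intros s Hs. unfold T. apply Rmult_le_pos; [left; apply jacobi_coef_pos; auto|].
    pose proof (pos_INR s). pose proof (pos_INR (N - s)).
    pose proof (pow_le A (pred s) ltac:(lra)). pose proof (pow_le A s ltac:(lra)).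
    pose proof (pow_le B (N - s) ltac:(lra)). pose proof (pow_le B (pred (N - s)) ltac:(lra)).
    apply Rplus_le_le_0_compat; repeat apply Rmult_le_pos; lra. }
  destruct N as [|N']; [lia|]. rewrite tech5.
  assert (0 <= sum_f_R0 T N') by (apply sum_f_R0_ge0; intros; apply HT; lia).
  assert (0 < T (S N')).
  { unfold T. apply Rmult_lt_0_compat; [apply jacobi_coef_pos; auto|].
    rewrite Nat.sub_diag. simpl pred. simpl (INR 0).
    pose proof (pow_lt A N' HA). pose proof (lt_0_INR (S N') ltac:(lia)).
    rewrite pow_O, Rmult_0_l, Rmult_0_l, Rmult_0_r, Rplus_0_r, Rmult_1_r. nra. }
  lra.
Qed.

Lemma increasing_seq_le (x : nat -> R) N : (forall i, (i < N)%nat -> x i < x (S i)) ->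
  forall i j, (i <= j)%nat -> (j <= N)%nat -> x i <= x j.
Proof.
  intros Hinc i j Hij. induction Hij; intros HjN; [lra|].
  specialize (IHHij ltac:(lia)). specialize (Hinc m ltac:(lia)). lra.
Qed.

Lemma increasing_seq_inj (x : nat -> R) N : (forall i, (i < N)%nat -> x i < x (S i)) ->
  forall i j, (i <= N)%nat -> (j <= N)%nat -> i <> j -> x i <> x j.
Proof.
  intros Hinc.
  assert (Hlt : forall i j, (i < j)%nat -> (j <= N)%nat -> x i < x j).
  { intros i j Hij HjN. pose proof (Hinc i ltac:(lia)).
    pose proof (increasing_seq_le x N Hinc (S i) j Hij HjN). lra. }
  intros i j Hi Hj Hij.
  destruct (Nat.lt_gt_cases i j) as [[Hlt'|Hgt] _]; auto;
    [pose proof (Hlt i j Hlt' Hj) | pose proof (Hlt j i Hgt Hi)]; lra.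
Qed.

(* Since [-1] is a zero of (1 - y^2) P_N', it is a node; no node lies left of -1 because
   P_N' does not vanish there. *)
Lemma JGL_first_node N alpha beta (x : nat -> R) (dP : R -> R) :
  (1 <= N)%nat -> -1 < alpha -> -1 < beta ->
  (forall y, derivable_pt_lim (jacobiP N alpha beta) y (dP y)) ->
  (forall i, (i < N)%nat -> x i < x (S i)) ->
  (forall y, (1 - y ^ 2) * dP y = 0 <-> exists j, (j <= N)%nat /\ y = x j) ->
  x 0%nat = -1.
Proof.
  intros HN Ha Hb HdP Hinc Hz.
  destruct (proj1 (Hz (-1)) ltac:(ring)) as [j [Hj Ej]].
  pose proof (increasing_seq_le x N Hinc 0%nat j ltac:(lia) Hj).
  destruct (Rtotal_order (x 0%nat) (-1)) as [Hlt|[|]]; [|auto|lra].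
  assert (Z : (1 - x 0%nat ^ 2) * dP (x 0%nat) = 0) by (apply Hz; exists 0%nat; split; auto; lia).
  destruct (Rmult_integral _ _ Z) as [Z'|Z']; [simpl in Z'; nra|].
  destruct (djacobiP_neq0_left N alpha beta (x 0%nat) HN Ha Hb Hlt).
  rewrite <- Z'. apply (uniqueness_limite (jacobiP N alpha beta) (x 0%nat)); auto.
  apply derivable_pt_lim_jacobiP.
Qed.

(** * The modified fractional operators on P_N *)

Lemma sum_delta (a : nat -> R) n i : (i <= n)%nat ->
  sum_f_R0 (fun j => a j * (if Nat.eqb i j then 1 else 0)) n = a i.
Proof.
  induction n; intros Hi; simpl.
  - replace i with 0%nat by lia. simpl. ring.
  - destruct (Nat.eq_dec i (S n)) as [->|Hne].
    + rewrite Nat.eqb_refl, sum_eq_R0; [ring|].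
      intros j Hj. destruct (Nat.eqb_spec (S n) j); [lia|ring].
    + rewrite IHn by lia. destruct (Nat.eqb_spec i (S n)); [lia|ring].
Qed.

Lemma sum_f_R0_first (G : nat -> R) n : (1 <= n)%nat -> sum_f_R0 G n = G 0%nat + sum_f 1 n G.
Proof.
  intros Hn. unfold sum_f. rewrite (decomp_sum _ n) by lia. f_equal.
  replace (n - 1)%nat with (pred n) by lia. apply sum_eq. intros i _.
  rewrite Nat.add_1_r. reflexivity.
Qed.

Lemma lagrange_interp N (x : nat -> R) (h : nat -> R -> R) u :
  (forall i j, (i <= N)%nat -> (j <= N)%nat -> i <> j -> x i <> x j) ->
  (forall j, (j <= N)%nat -> poly_deg_le N (h j)) ->
  (forall i j, (i <= N)%nat -> (j <= N)%nat -> h j (x i) = if Nat.eqb i j then 1 else 0) ->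
  poly_deg_le N u -> forall y, u y = sum_f_R0 (fun j => u (x j) * h j y) N.
Proof.
  intros Hinj Hh Hdelta Hu y. apply Rminus_diag_uniq. revert y.
  apply (poly_deg_le_roots_eq0 N _ x); auto.
  - apply poly_deg_le_sub; auto.
    apply poly_deg_le_sum. intros; apply poly_deg_le_scal; auto.
  - intros i Hi. rewrite (sum_eq _ (fun j => u (x j) * (if Nat.eqb i j then 1 else 0))).
    + rewrite sum_delta; auto; ring.
    + intros j Hj. rewrite Hdelta; auto.
Qed.

Lemma shifted_sum_at_m1 (d : nat -> R) n : sum_f_R0 (fun m => d m * (1 + -1) ^ m) n = d 0%nat.
Proof. replace (1 + -1) with 0 by ring. apply sum_pow0. Qed.

Lemma Ihat_poly_deg_le mu n u : 0 < mu -> poly_deg_le n u ->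
  exists p, poly_deg_le n p /\ p (-1) = u (-1) / (mu * Gamma mu) /\
    forall y, -1 < y -> Ihat mu u y = p y.
Proof.
  intros Hmu Hu. pose proof (Gamma_pos mu Hmu).
  destruct (proj1 (poly_deg_le_taylor n 1 u) Hu) as [d Hd].
  exists (fun y => sum_f_R0 (fun m => d m * (rl_coef m mu / Gamma mu) * (1 + y) ^ m) n).
  split; [|split].
  - apply (poly_deg_le_taylor n 1). eexists; intros; reflexivity.
  - rewrite Hd, (shifted_sum_at_m1 (fun m => d m * (rl_coef m mu / Gamma mu))), shifted_sum_at_m1.
    simpl. field. lra.
  - intros y Hy. apply Ihat_shifted_poly; auto.
Qed.

Lemma Ihat_poly_deg_le_onto mu n phi : 0 < mu -> poly_deg_le n phi ->
  exists u, poly_deg_le n u /\ u (-1) = mu * Gamma mu * phi (-1) /\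
    forall y, -1 < y -> Ihat mu u y = phi y.
Proof.
  intros Hmu Hphi. pose proof (Gamma_pos mu Hmu).
  destruct (proj1 (poly_deg_le_taylor n 1 phi) Hphi) as [e He].
  set (u := fun y => sum_f_R0 (fun m => e m / (rl_coef m mu / Gamma mu) * (1 + y) ^ m) n).
  exists u. split; [|split].
  - apply (poly_deg_le_taylor n 1). eexists; intros; reflexivity.
  - unfold u. rewrite He, (shifted_sum_at_m1 (fun m => e m / (rl_coef m mu / Gamma mu))),
      shifted_sum_at_m1. simpl. field. lra.
  - intros y Hy. rewrite (Ihat_shifted_poly mu u _ n y Hmu Hy (fun z => eq_refl)), He.
    apply sum_eq. intros m _. pose proof (rl_coef_pos m mu Hmu). field. lra.
Qed.

Lemma Ihat_add mu n f g y : 0 < mu -> -1 < y -> poly_deg_le n f -> poly_deg_le n g ->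
  Ihat mu (fun z => f z + g z) y = Ihat mu f y + Ihat mu g y.
Proof.
  intros Hmu Hy Hf Hg.
  destruct (proj1 (poly_deg_le_taylor n 1 f) Hf) as [df Hdf].
  destruct (proj1 (poly_deg_le_taylor n 1 g) Hg) as [dg Hdg].
  rewrite (Ihat_shifted_poly mu f df n y), (Ihat_shifted_poly mu g dg n y), <- plus_sum by auto.
  rewrite (Ihat_shifted_poly mu _ (fun m => df m + dg m) n y); auto.
  - apply sum_eq; intros; ring.
  - intros z. rewrite Hdf, Hdg, <- plus_sum. apply sum_eq; intros; ring.
Qed.

Lemma Ihat_scal mu n a f y : 0 < mu -> -1 < y -> poly_deg_le n f ->
  Ihat mu (fun z => a * f z) y = a * Ihat mu f y.
Proof.
  intros Hmu Hy Hf. destruct (proj1 (poly_deg_le_taylor n 1 f) Hf) as [d Hd].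
  rewrite (Ihat_shifted_poly mu f d n y), (Ihat_shifted_poly mu _ (fun m => a * d m) n y), scal_sum;
    auto.
  - apply sum_eq; intros; ring.
  - intros z. rewrite Hd, scal_sum. apply sum_eq; intros; ring.
Qed.

Lemma Ihat_sum mu n (F : nat -> R -> R) k y : 0 < mu -> -1 < y ->
  (forall i, (i <= k)%nat -> poly_deg_le n (F i)) ->
  Ihat mu (fun z => sum_f_R0 (fun i => F i z) k) y = sum_f_R0 (fun i => Ihat mu (F i) y) k.
Proof.
  intros Hmu Hy. induction k; intros HF; simpl; [reflexivity|].
  rewrite (Ihat_add mu n), IHk; auto.
  apply poly_deg_le_sum. intros; apply HF; lia.
Qed.

Lemma RL_derivative_poly_deg_le mu n u (k : nat) : 0 < mu -> mu < INR k -> poly_deg_le n u ->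
  exists p, poly_deg_le n p /\
    has_nth_deriv_on k (I_minus (INR k - mu) u) (fun y => Rpower (1 + y) (- mu) * p y).
Proof.
  intros Hmu Hk Hu. destruct (proj1 (poly_deg_le_taylor n 1 u) Hu) as [d Hd].
  set (r := INR k - mu). assert (Hr : 0 < r) by (unfold r; lra).
  set (e := fun m => / Gamma r * (d m * rl_coef m r)).
  exists (fun y => sum_f_R0 (fun m => e m * falling (r + INR m) k * (1 + y) ^ m) n). split.
  - apply (poly_deg_le_taylor n 1). eexists; intros; reflexivity.
  - apply (has_nth_deriv_on_Rpower_sum k n e (fun m => r + INR m)).
    + intros y Hy. rewrite (I_minus_shifted_poly r u d n y Hr ltac:(lra) Hd), scal_sum.
      apply sum_eq. intros. unfold e. ring.
    + intros y Hy. rewrite scal_sum. apply sum_eq. intros m _.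
      replace (r + INR m - INR k) with (- mu + INR m) by (unfold r; ring).
      rewrite Rpower_plus, Rpower_pow by lra. ring.
Qed.

Section Ihat_lagrange_span.

Variables (N : nat) (x : nat -> R) (h : nat -> R -> R) (mu : R).
Hypothesis HN : (1 <= N)%nat.
Hypothesis Hmu : 0 < mu.
Hypothesis Hinj : forall i j, (i <= N)%nat -> (j <= N)%nat -> i <> j -> x i <> x j.
Hypothesis Hx0 : x 0%nat = -1.
Hypothesis Hh : forall j, (j <= N)%nat -> poly_deg_le N (h j).
Hypothesis Hdelta : forall i j, (i <= N)%nat -> (j <= N)%nat ->
  h j (x i) = if Nat.eqb i j then 1 else 0.

Lemma Ihat_lagrange_comb c y : -1 < y ->
  Ihat mu (fun z => sum_f 1 N (fun j => c j * h j z)) y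
  = sum_f 1 N (fun j => c j * Ihat mu (h j) y).
Proof.
  intros Hy. unfold sum_f.
  rewrite (Ihat_sum mu N (fun i z => c (i + 1)%nat * h (i + 1)%nat z)) by (auto; intros;
    apply poly_deg_le_scal, Hh; lia).
  apply sum_eq. intros i Hi. apply (Ihat_scal mu N); auto. apply Hh; lia.
Qed.

Lemma Ihat_lagrange_comb_poly (c : nat -> R) : exists phi, poly_deg_le N phi /\ phi (-1) = 0 /\
  forall y, -1 < y < 1 -> phi y = sum_f 1 N (fun j => c j * Ihat mu (h j) y).
Proof.
  set (Psi := fun z => sum_f 1 N (fun j => c j * h j z)).
  assert (HPsi : poly_deg_le N Psi).
  { apply poly_deg_le_sum. intros; apply poly_deg_le_scal, Hh; lia. }
  assert (HPsi0 : Psi (-1) = 0).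
  { rewrite <- Hx0. unfold Psi, sum_f. apply sum_eq_R0. intros i Hi.
    rewrite Hdelta by lia. destruct (Nat.eqb_spec 0 (i + 1)); [lia|ring]. }
  destruct (Ihat_poly_deg_le mu N Psi Hmu HPsi) as [p [Hp [Hp0 HIp]]].
  exists p. split; [|split]; auto.
  - rewrite Hp0, HPsi0. unfold Rdiv. ring.
  - intros y Hy. rewrite <- HIp by lra. apply Ihat_lagrange_comb. lra.
Qed.

Lemma vanishing_poly_in_Ihat_span phi : poly_deg_le N phi -> phi (-1) = 0 ->
  exists c : nat -> R, forall y, -1 < y < 1 ->
    phi y = sum_f 1 N (fun j => c j * Ihat mu (h j) y).
Proof.
  intros Hphi Hphi0. destruct (Ihat_poly_deg_le_onto mu N phi Hmu Hphi) as [u [Hu [Hu0 HIu]]].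
  exists (fun j => u (x j)). intros y Hy.
  assert (Hux0 : u (x 0%nat) = 0) by (rewrite Hx0, Hu0, Hphi0; ring).
  rewrite <- HIu, <- Ihat_lagrange_comb by lra.
  replace (fun z => sum_f 1 N (fun j => u (x j) * h j z)) with u; [reflexivity|].
  apply functional_extensionality. intro z.
  rewrite (lagrange_interp N x h u), sum_f_R0_first, Hux0 by auto. ring.
Qed.

End Ihat_lagrange_span.

Theorem lemma3p2 (N : nat) (alpha beta : R) (x : nat -> R) (dP : R -> R)
    (h : nat -> R -> R) :
  (1 <= N)%nat -> -1 < alpha -> -1 < beta ->
  (forall y, derivable_pt_lim (jacobiP N alpha beta) y (dP y)) ->
  (forall i, (i < N)%nat -> x i < x (S i)) ->
  (forall y, (1 - y ^ 2) * dP y = 0 <-> exists j, (j <= N)%nat /\ y = x j) ->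
  (forall j, (j <= N)%nat -> poly_deg_le N (h j)) ->
  (forall i j, (i <= N)%nat -> (j <= N)%nat ->
     h j (x i) = if Nat.eqb i j then 1 else 0) ->
  forall mu, 0 < mu ->
  (forall u, poly_deg_le N u ->
     (exists p, poly_deg_le N p /\
        forall y, -1 < y < 1 -> Ihat mu u y = p y) /\
     (forall k : nat, INR k - 1 < mu < INR k ->
        exists p, poly_deg_le N p /\
          has_nth_deriv_on k (I_minus (INR k - mu) u)
                             (fun y => Rpower (1 + y) (- mu) * p y))) /\
  (forall phi, poly_deg_le N phi ->
     (phi (-1) = 0 <->
      exists c : nat -> R, forall y, -1 < y < 1 ->
        phi y = sum_f 1 N (fun j => c j * Ihat mu (h j) y))) /\
  (forall c : nat -> R, exists phi, poly_deg_le N phi /\ phi (-1) = 0 /\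
     forall y, -1 < y < 1 -> phi y = sum_f 1 N (fun j => c j * Ihat mu (h j) y)).
Proof.
  intros HN Ha Hb HdP Hinc Hz Hh Hdelta mu Hmu.
  pose proof (increasing_seq_inj x N Hinc) as Hinj.
  pose proof (JGL_first_node N alpha beta x dP HN Ha Hb HdP Hinc Hz) as Hx0.
  split; [|split].
  - intros u Hu. split.
    + destruct (Ihat_poly_deg_le mu N u Hmu Hu) as [p [Hp [_ HIp]]].
      exists p. split; auto. intros y Hy. apply HIp. lra.
    + intros k Hk. apply RL_derivative_poly_deg_le; auto; lra.
  - intros phi Hphi. split.
    + apply (vanishing_poly_in_Ihat_span N x h mu); auto.
    + intros [c Hc].
      destruct (Ihat_lagrange_comb_poly N x h mu HN Hmu Hx0 Hh Hdelta c) as [p [Hp [Hp0 Hpc]]].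
      rewrite <- Hp0. apply (poly_eq_of_eq_on_interval N phi p (-1) 1); auto; [lra|].
      intros y Hy. rewrite Hc, Hpc; auto.
  - apply (Ihat_lagrange_comb_poly N x h mu); auto.
Qed.
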